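(* Let $d,a,b$ be positive integers with $\min(a,b)\ge d-1$, and let $\mathfrak{Irr}_d^{(a,b)}$ be the set of irreducible pairs $(\mathcal D,d)$ in $(a,b)$-standard form. Then the map $$\Psi_d^{(a,b)}:\mathfrak{Irr}_d^{(a,b)}\to\mathfrak P_d^{(a,b)}\cap\mathbb Z^{2d-4},\quad(\mathcal D,d)\mapsto(c_1(X),\dots,c_{d-2}(X),c_1(Y),\dots,c_{d-2}(Y))$$ is a well-defined bijection.
   Context: $\mathbb N=\{1,2,\dots\}$, $[n]=\{1,\dots,n\}$. A Ferrers diagram is a finite $\mathcal D\subseteq\mathbb N^2$ such that $(x,y)\in\mathcal D$ implies $(i,j)\in\mathcal D$ for all $i\in[x],j\in[y]$ (first coordinate = row, second = column). With column heights $c_i=|\mathcal D\cap(\mathbb N\times\{i\})|$, for $0\le j\le d-1$ let $\nu_j(\mathcal D,d)=\sum_{i\ge j+1}\max\{0,c_i-d+j\}$ and $\nu_{\min}(\mathcal D,d)=\min_j\nu_j(\mathcal D,d)$. A point $P\in\mathcal D$ is removable if $\mathcal D\setminus\{P\}$ is a Ferrers diagram. For $\mathcal D'=\mathcal D\setminus\{P\}$ with $P$ removable, write $\mathcal D'\xrightarrow{d}\mathcal D$ if $\nu_{\min}(\mathcal D',d)=\nu_{\min}(\mathcal D,d)$ and $\mathcal D\xrightarrow{d}\mathcal D'$ otherwise; $(\mathcal D,d)$ is irreducible if no Ferrers diagram $\mathcal D'$ satisfies $\mathcal D'\xrightarrow{d}\mathcal D$. $(\mathcal D,d)$ is in $(a,b)$-standard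 form if $\mathcal D\cap\{d-1,\dots,n\}^2=\{d-1,\dots,a\}\times\{d-1,\dots,b\}$ for any $n$ with $\mathcal D\subseteq[n]^2$; then for $i\in[d-2]$, $c_i(X)=|\{y>b:(i,y)\in\mathcal D\}|$ and $c_i(Y)=|\{x>a:(x,i)\in\mathcal D\}|$. The set $\mathfrak P_d^{(a,b)}\subseteq\mathbb R^{2d-4}$ consists of all $(x_1,\dots,x_{d-2},y_1,\dots,y_{d-2})$ with: $x_j\ge x_{j+1}$, $y_j\ge y_{j+1}$ for $j\in[d-3]$; $x_j,y_j\ge0$ for $j\in[d-2]$; $j(b-a+d-1-j)+\sum_{i=0}^{j-2}x_{d-2-i}-\sum_{i=1}^{j}y_i\ge0$ for $j\in[d-2]$; $\sum_{i=1}^{d-2}y_i-\sum_{i=1}^{d-2}x_i=(b-a)(d-1)$; and, only when $a=b=d-1$, additionally there exists $j\in[d-2]$ with $j(d-1-j)+\sum_{i=0}^{j-2}x_{d-2-i}-\sum_{i=1}^{j}y_i=0$. *)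

From mathcomp Require Import all_boot all_order all_algebra finmap.
Set Implicit Arguments.
Unset Strict Implicit.
Unset Printing Implicit Defensive.
Import GRing.Theory Num.Theory.
Local Open Scope fset_scope.

(* A finite set of points of N^2 (first coordinate = row, second = column). *)
Notation diagram := {fset (nat * nat)}.

Definition is_ferrers (D : diagram) : Prop :=
  forall p, p \in D ->
    [/\ (0 < p.1)%N, (0 < p.2)%N &
        forall i j, (0 < i <= p.1)%N -> (0 < j <= p.2)%N -> (i, j) \in D].

Definition col_height (D : diagram) (i : nat) : nat :=
  #|` [fset p in D | p.2 == i] |.

Definition columns (D : diagram) : {fset nat} := [fset p.2 | p in D].

(* Truncated nat subtraction realises
   max{0,.}; columns of height 0 contribute 0, so summing over the
   nonempty columns is the same as summing over all i >= j+1. *)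
Definition nu (D : diagram) (d j : nat) : nat :=
  \sum_(i <- columns D | (j < i)%N) (col_height D i - (d - j - 1))%N.

Definition nu_min (D : diagram) (d : nat) : nat :=
  \big[minn/nu D d 0]_(j < d) nu D d j.

Definition removable (P : nat * nat) (D : diagram) : Prop :=
  P \in D /\ is_ferrers (D `\ P).

Definition arrow (d : nat) (D1 D2 : diagram) : Prop :=
  (exists P, [/\ removable P D2, D1 = D2 `\ P & nu_min D1 d = nu_min D2 d])
  \/
  (exists P, [/\ removable P D1, D2 = D1 `\ P & nu_min D2 d <> nu_min D1 d]).

Definition irreducible (D : diagram) (d : nat) : Prop :=
  ~ exists D', is_ferrers D' /\ arrow d D' D.

Definition standard_form (D : diagram) (d a b : nat) : Prop :=
  forall n : nat,
    (forall p, p \in D -> (0 < p.1 <= n)%N /\ (0 < p.2 <= n)%N) ->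
    forall x y : nat,
      ((x, y) \in D /\ (d - 1 <= x <= n)%N /\ (d - 1 <= y <= n)%N)
      <-> ((d - 1 <= x <= a)%N /\ (d - 1 <= y <= b)%N).

Definition cX (D : diagram) (b i : nat) : nat :=
  #|` [fset p in D | (p.1 == i) && (b < p.2)%N] |.
Definition cY (D : diagram) (a i : nat) : nat :=
  #|` [fset p in D | (p.2 == i) && (a < p.1)%N] |.

Definition Irr (d a b : nat) (D : diagram) : Prop :=
  [/\ is_ferrers D, standard_form D d a b & irreducible D d].

Local Open Scope ring_scope.

Definition Pform (d a b : nat) (x y : nat -> int) (j : nat) : int :=
  (j%:Z * (b%:Z - a%:Z + d%:Z - 1 - j%:Z))
  + (\sum_(0 <= i < j.-1) x (d - 2 - i)%N)
  - (\sum_(1 <= i < j.+1) y i).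

(* P_d^(a,b) ∩ Z^(2d-4); a vector (x_1..x_{d-2}, y_1..y_{d-2}) is given by
   two functions x y : nat -> int, of which only the indices 1..d-2 matter. *)
Definition inP (d a b : nat) (x y : nat -> int) : Prop :=
  [/\ (forall j, (1 <= j <= d - 3)%N -> x j.+1 <= x j /\ y j.+1 <= y j),
      (forall j, (1 <= j <= d - 2)%N -> 0 <= x j /\ 0 <= y j),
      (forall j, (1 <= j <= d - 2)%N -> 0 <= Pform d a b x y j),
      (\sum_(1 <= i < d - 1) y i) - (\sum_(1 <= i < d - 1) x i)
        = (b%:Z - a%:Z) * (d%:Z - 1)
    & ((a = b /\ b = d - 1)%N ->
        exists j, (1 <= j <= d - 2)%N /\ Pform d a b x y j = 0)].

(* For a Ferrers diagram, nu_j(D,d) is the number of cells (r,i) of D with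
   r > d-1-j and i > j.  Adding or removing one cell P thus changes nu_j by one
   exactly when P lies in this j-th quadrant, so D is irreducible iff every
   removable cell lies in the quadrant of some minimizer of j |-> nu_j and every
   addable cell misses the quadrant of some minimizer.
   A diagram in (a,b)-standard form is the rectangle [a] x [b] with arms of
   lengths c_r(X) to the right of the rows r < d-1 and c_i(Y) below the columns
   i < d-1.  Comparing the quadrants of j and j+1 gives
   nu_{j+1} - nu_j = b-a+d-2-2j + c_{d-1-j}(X) - c_{j+1}(Y), so nu_j - nu_0 is
   the j-th linear form defining P_d^(a,b).  If the least minimizer m were
   positive, irreducibility would forbid adding a cell after row d-m and removing
   the last cell of column m; these two constraints make nu strictly concave at m,
   contradicting minimality.  Symmetrically the greatest minimizer is d-1, and the
   extra condition for a = b = d-1 comes from removing the corner (a,b).  So the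
   irreducible standard diagrams are exactly those whose arms satisfy the
   inequalities of P_d^(a,b), and a standard diagram is determined by its arms. *)

From mathcomp Require Import all_boot all_order all_algebra finmap zify ring.
Import GRing.Theory Num.Theory.
Local Open Scope fset_scope.
Local Open Scope nat_scope.
Set Implicit Arguments. Unset Strict Implicit. Unset Printing Implicit Defensive.

Lemma card_fsep (T : choiceType) (A : {fset T}) (P : pred T) :
  #|` [fset p in A | P p]| = \sum_(p <- A) P p.
Proof. by rewrite card_fset_sum1 -big_fset_condE big_mkcond; apply: eq_bigr => p _; case: P. Qed.

Lemma count_gt_iota1 t L : count (fun k => t < k) (iota 1 L) = L - t.
Proof. by elim: L => // L IH; rewrite -[L.+1]addn1 iotaD count_cat IH /=; lia. Qed.

Lemma downclosed_interval (P : pred nat) B :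
  (forall k, P k -> 0 < k <= B) -> (forall k k', P k -> 0 < k' <= k -> P k') ->
  exists L, forall k, P k = (0 < k <= L).
Proof.
move=> bndP downP; case: (@hasP _ P (iota 0 B.+1)) => [[k _ Pk] | noP].
- have /= [L PL maxL] := @ex_maxnP P B (ex_intro _ k Pk) (fun k Pk => proj2 (andP (bndP k Pk))).
  exists L => k'; apply/idP/idP => [Pk' | /(downP L k' PL)//].
  by rewrite (maxL _ Pk') andbT; case/andP: (bndP k' Pk').
- exists 0 => k'; have -> : (0 < k' <= 0) = false by lia.
  apply/negbTE/negP => Pk'.
  by apply: noP; exists k' => //; rewrite mem_iota; have := bndP k' Pk'; lia.
Qed.

Lemma ferrers_row (D : diagram) (r : nat) : is_ferrers D ->
  exists L, forall i, ((r, i) \in D) = (0 < i <= L).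
Proof.
move=> ferD; apply: (@downclosed_interval _ (\max_(p <- D) p.2)) => [i rD | i i' rD lt_i'].
- by have [_ -> _] := ferD _ rD; exact: (@leq_bigmax_seq _ _ xpredT (fun p => p.2) _ rD).
- by have [r_gt0 _ downD] := ferD _ rD; apply: downD; rewrite //= r_gt0 leqnn.
Qed.

Lemma ferrers_col (D : diagram) (i : nat) : is_ferrers D ->
  exists L, forall r, ((r, i) \in D) = (0 < r <= L).
Proof.
move=> ferD; apply: (@downclosed_interval _ (\max_(p <- D) p.1)) => [r rD | r r' rD lt_r'].
- by have [-> _ _] := ferD _ rD; exact: (@leq_bigmax_seq _ _ xpredT (fun p => p.1) _ rD).
- by have [_ i_gt0 downD] := ferD _ rD; apply: downD; rewrite //= i_gt0 leqnn.
Qed.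

Lemma card_row (D : diagram) (r L : nat) (Q : pred nat) :
  (forall i, ((r, i) \in D) = (0 < i <= L)) ->
  #|` [fset p in D | (p.1 == r) && Q p.2]| = count Q (iota 1 L).
Proof.
move=> rowD; rewrite -size_filter.
have -> : [fset p in D | (p.1 == r) && Q p.2] = [fset (r, i) | i in filter Q (iota 1 L)].
  apply/fsetP => -[r' i]; rewrite !inE /=; apply/andP/imfsetP => [[rD /andP [/eqP er Qi]] | [k /=]].
  - by subst r'; exists i; rewrite //= mem_filter Qi mem_iota -rowD rD.
  - rewrite mem_filter mem_iota => /andP [Qk kL] [-> ->]; rewrite eqxx Qk rowD; split => //; lia.
rewrite card_imfset /=; last by move=> i j [].
by rewrite undup_id // filter_uniq // iota_uniq.
Qed.

Lemma card_col (D : diagram) (i L : nat) (Q : pred nat) :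
  (forall r, ((r, i) \in D) = (0 < r <= L)) ->
  #|` [fset p in D | (p.2 == i) && Q p.1]| = count Q (iota 1 L).
Proof.
move=> colD; rewrite -size_filter.
have -> : [fset p in D | (p.2 == i) && Q p.1] = [fset (r, i) | r in filter Q (iota 1 L)].
  apply/fsetP => -[r i']; rewrite !inE /=; apply/andP/imfsetP => [[rD /andP [/eqP ei Qr]] | [k /=]].
  - by subst i'; exists r; rewrite //= mem_filter Qr mem_iota -colD rD.
  - rewrite mem_filter mem_iota => /andP [Qk kL] [-> ->]; rewrite eqxx Qk colD; split => //; lia.
rewrite card_imfset /=; last by move=> r r' [].
by rewrite undup_id // filter_uniq // iota_uniq.
Qed.

Lemma col_height_gt (D : diagram) (i t : nat) : is_ferrers D ->
  col_height D i - t = \sum_(p <- D) ((p.2 == i) && (t < p.1)).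
Proof.
move=> ferD; have [L colD] := ferrers_col i ferD.
rewrite -card_fsep (card_col _ colD) count_gt_iota1.
have := card_col (fun r => 0 < r) colD; rewrite count_gt_iota1 subn0 => <-.
congr (#|` _| - t); apply/fsetP => p; rewrite !inE.
by case pD: (p \in D) => //=; have [-> _ _] := ferD _ pD; rewrite andbT.
Qed.

Definition nu_quadrant (d j : nat) (p : nat * nat) : bool := (j < p.2) && (d - j - 1 < p.1).

Lemma nuE (D : diagram) d j : is_ferrers D -> nu D d j = \sum_(p <- D) nu_quadrant d j p.
Proof.
move=> ferD; rewrite /nu; under eq_bigr => i _ do rewrite col_height_gt //.
rewrite exchange_big; apply: eq_big_seq => p pD /=.
have p2D : p.2 \in columns D by apply/imfsetP; exists p.
rewrite big_mkcond (bigD1_seq p.2) ?fset_uniq //= eqxx big1 ?addn0 => [|i /negbTE ne_ip].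
- by rewrite /nu_quadrant; case: (j < p.2).
- by rewrite eq_sym ne_ip if_same.
Qed.

Lemma nu_fsetD1 (D : diagram) d j P : is_ferrers D -> is_ferrers (D `\ P) -> P \in D ->
  nu D d j = nu_quadrant d j P + nu (D `\ P) d j.
Proof. by move=> ferD ferDP PD; rewrite !nuE // (big_fsetD1 P). Qed.

Lemma big_minn_le (I : eqType) (r : seq I) (P : pred I) x0 (F : I -> nat) i :
  i \in r -> P i -> \big[minn/x0]_(k <- r | P k) F k <= F i.
Proof.
elim: r => // k r IH; rewrite inE big_cons => /orP [/eqP <- -> | ir Pi]; first exact: geq_minl.
by case: (P k); rewrite ?geq_min IH ?orbT.
Qed.

Lemma nu_min_le (D : diagram) d j : j < d -> nu_min D d <= nu D d j.
Proof. by move=> lt_jd; exact: (big_minn_le _ _ (mem_index_enum (Ordinal lt_jd))). Qed.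

Lemma nu_min_attained (D : diagram) d : 0 < d -> exists2 j, j < d & nu_min D d = nu D d j.
Proof.
move=> d_gt0; apply: (big_ind (fun m => exists2 j, j < d & m = nu D d j)).
- by exists 0.
- by move=> _ _ [j ? ->] [k ? ->]; rewrite /minn; case: ifP => _; [exists j | exists k].
- by move=> k _; exists k.
Qed.

Section NuMinGrowth.
Variables (D D' : diagram) (d : nat) (e : nat -> bool).
Hypotheses (d_gt0 : 0 < d) (nuD' : forall j, nu D' d j = e j + nu D d j).

Lemma nu_min_grow_eq :
  nu_min D' d = nu_min D d <-> exists2 j, j < d & nu D d j = nu_min D d /\ ~~ e j.
Proof.
have [k lt_kd minD'] := nu_min_attained D' d_gt0.
have [m lt_md minD] := nu_min_attained D d_gt0.
have leDk := nu_min_le D lt_kd; have leD'm := nu_min_le D' lt_md.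
rewrite nuD' in minD'; rewrite nuD' in leD'm.
split => [eq_min | [j lt_jd [minDj /negbTE ej]]].
- by exists k => //; move: eq_min minD'; case: (e k) => /=; lia.
- by have := nu_min_le D' lt_jd; rewrite nuD' ej; lia.
Qed.

Lemma nu_min_grow_neq :
  nu_min D' d <> nu_min D d <-> exists2 j, j < d & nu D' d j = nu_min D' d /\ e j.
Proof.
have [k lt_kd minD'] := nu_min_attained D' d_gt0.
have [m lt_md minD] := nu_min_attained D d_gt0.
have leDk := nu_min_le D lt_kd; have leD'm := nu_min_le D' lt_md.
rewrite nuD' in minD'; rewrite nuD' in leD'm.
split => [ne_min | [j lt_jd [minD'j ej]]].
- exists m => //; rewrite nuD'.
  by case: (e m) leD'm => /= leD'm; [split | case: ne_min]; lia.
- by have := nu_min_le D lt_jd; move: minD'j; rewrite nuD' ej; lia.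
Qed.

End NuMinGrowth.

Lemma irreducibleP (D : diagram) d : 0 < d -> is_ferrers D ->
  irreducible D d <->
  (forall P, P \in D -> is_ferrers (D `\ P) ->
     exists2 j, j < d & nu D d j = nu_min D d /\ nu_quadrant d j P) /\
  (forall P, P \notin D -> is_ferrers (P |` D) ->
     exists2 j, j < d & nu D d j = nu_min D d /\ ~~ nu_quadrant d j P).
Proof.
move=> d_gt0 ferD; split => [irrD | [remP addP] [D' [ferD' arrD']]]; first split.
- move=> P PD ferDP; have nuD := fun j => nu_fsetD1 d j ferD ferDP PD.
  case: (eqVneq (nu_min D d) (nu_min (D `\ P) d)) => [eq_min | /eqP ne_min].
  + by case: irrD; exists (D `\ P); split => //; left; exists P.
  + by apply/(nu_min_grow_neq d_gt0 nuD).
- move=> P PnD ferPD.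
  have nuPD : forall j, nu (P |` D) d j = nu_quadrant d j P + nu D d j.
    by move=> j; have := @nu_fsetD1 _ d j P ferPD; rewrite fsetU1K // => /(_ ferD (fset1U1 _ _)).
  case: (eqVneq (nu_min (P |` D) d) (nu_min D d)) => [eq_min | /eqP ne_min].
  + exact/(nu_min_grow_eq d_gt0 nuPD).
  + case: irrD; exists (P |` D); split => //; right; exists P.
    rewrite fsetU1K //; split => //; last by move/esym.
    by split; rewrite ?fset1U1 ?fsetU1K.
- case: arrD' => [[P [[PD ferDP] -> eq_min]] | [P [[PD' ferD'P] eqD ne_min]]].
  + have nuD := fun j => nu_fsetD1 d j ferD ferDP PD.
    by apply/(nu_min_grow_neq d_gt0 nuD): (remP P PD ferDP); rewrite eq_min.
  + have PnD : P \notin D by rewrite eqD fsetD11.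
    have eqD' : D' = P |` D by rewrite eqD fsetD1K.
    have nuD' : forall j, nu D' d j = nu_quadrant d j P + nu D d j.
      by move=> j; rewrite (nu_fsetD1 d j ferD' ferD'P PD') -eqD.
    by apply: ne_min; apply/esym/(nu_min_grow_eq d_gt0 nuD'); apply: addP; rewrite -?eqD'.
Qed.

Lemma ferrers_fset1U (D : diagram) (r i : nat) : is_ferrers D -> 0 < r -> 0 < i ->
  (r = 1 \/ (r.-1, i) \in D) -> (i = 1 \/ (r, i.-1) \in D) -> is_ferrers ((r, i) |` D).
Proof.
move=> ferD r_gt0 i_gt0 upD leftD p; rewrite in_fset1U => /predU1P [-> | pD]; last first.
  by have [? ? downD] := ferD _ pD; split => // r' i' ? ?; rewrite in_fset1U downD ?orbT.
split => //= r' i' /andP [r'_gt0 le_r'r] /andP [i'_gt0 le_i'i]; rewrite in_fset1U.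
have [lt_r'r | ge_r'r] := ltnP r' r.
  case: upD => [| /ferD [_ _ downD]]; first lia.
  by rewrite downD ?orbT //=; lia.
have [lt_i'i | ge_i'i] := ltnP i' i; last by rewrite xpair_eqE; lia.
case: leftD => [| /ferD [_ _ downD]]; first lia.
by rewrite downD ?orbT //=; lia.
Qed.

Lemma ferrers_fsetD1 (D : diagram) (r i : nat) : is_ferrers D ->
  (r.+1, i) \notin D -> (r, i.+1) \notin D -> is_ferrers (D `\ (r, i)).
Proof.
move=> ferD downP rightP [r' i']; rewrite in_fsetD1 => /andP [ne_p pD].
have [r'_gt0 i'_gt0 downD] := ferD _ pD; split => //= r'' i'' le_r'' le_i''.
rewrite in_fsetD1 downD // andbT; apply: contraNneq ne_p => -[er ei]; subst r'' i''.
have [lt_rr' | ge_rr'] := ltnP r r'.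
  by case/negP: downP; apply: downD => /=; lia.
have [lt_ii' | ge_ii'] := ltnP i i'.
  by case/negP: rightP; apply: downD => /=; lia.
by rewrite xpair_eqE; lia.
Qed.

Lemma diagram_bounded (D : diagram) : exists n, forall p, p \in D -> p.1 <= n /\ p.2 <= n.
Proof.
exists (\max_(p <- D) maxn p.1 p.2) => p pD.
by have := @leq_bigmax_seq _ _ xpredT (fun p => maxn p.1 p.2) _ pD isT; rewrite geq_max => /andP.
Qed.

Lemma standard_formP (D : diagram) d a b : is_ferrers D ->
  standard_form D d a b <->
  (forall r i, d - 1 <= r -> d - 1 <= i -> ((r, i) \in D) = (r <= a) && (i <= b)).
Proof.
move=> ferD; split => [stdD r i le_r le_i | cornerD n bndD r i].
- have [n bndD] := diagram_bounded D.
  have bndD' p : p \in D -> 0 < p.1 <= maxn n (maxn a b) /\ 0 < p.2 <= maxn n (maxn a b).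
    by move=> pD; have [? ? _] := ferD _ pD; have := bndD _ pD; lia.
  have [inD inR] := stdD _ bndD' r i.
  apply/idP/andP => [rD | [? ?]]; last by move: inR; lia.
  have /inD : (r, i) \in D /\ d - 1 <= r <= maxn n (maxn a b) /\ d - 1 <= i <= maxn n (maxn a b).
    by have /= [? ?] := bndD _ rD; split => //; lia.
  by lia.
- split => [[rD [? ?]] | [? ?]]; first by move: rD; rewrite cornerD //; lia.
  have rD : (r, i) \in D by rewrite cornerD //; lia.
  by have /= := bndD _ rD; split => //; lia.
Qed.

Section PformAlgebra.
Local Open Scope ring_scope.
Variables (d a b : nat) (X Y : nat -> int).

Lemma Pform0 : Pform d a b X Y 0 = 0.
Proof. by rewrite /Pform !big_geq ?mul0r ?subr0 ?addr0. Qed.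

Lemma PformS j :
  Pform d a b X Y j.+1 = Pform d a b X Y j + (b%:Z - a%:Z + d%:Z - 2 - 2 * j%:Z)
    + (if j is 0 then 0 else X (d - 1 - j)%N) - Y j.+1.
Proof.
have sumX : \sum_(0 <= i < j) X (d - 2 - i)%N =
    \sum_(0 <= i < j.-1) X (d - 2 - i)%N + (if j is 0 then 0 else X (d - 1 - j)%N).
  case: j => [|j] /=; first by rewrite big_geq // addr0.
  by rewrite big_nat_recr //= (_ : (d - 2 - j = d - 1 - j.+1)%N) //; lia.
rewrite /Pform big_nat_recr //= sumX -[j.+1]addn1 PoszD; ring.
Qed.

Lemma Pform_last : (2 <= d)%N ->
  Pform d a b X Y (d - 1) = (b%:Z - a%:Z) * (d%:Z - 1)
    + \sum_(1 <= i < d - 1) X i - \sum_(1 <= i < d - 1) Y i - Y (d - 1)%N.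
Proof.
move=> d_ge2; rewrite /Pform big_nat_recr /=; last by lia.
have -> : \sum_(0 <= i < (d - 1).-1) X (d - 2 - i)%N = \sum_(1 <= i < d - 1) X i.
  rewrite big_nat_rev big_add1 (_ : (d - 1).-1 = d - 2)%N /=; last by lia.
  by apply: eq_big_nat => i /andP [_ lt_i]; congr X; lia.
have -> : ((d - 1)%N : int) = d%:Z - 1 by lia.
ring.
Qed.

Lemma Pform_congr (X' Y' : nat -> int) j :
  (forall i, (0 < i <= d - 2)%N -> X i = X' i /\ Y i = Y' i) -> (j <= d - 2)%N ->
  Pform d a b X Y j = Pform d a b X' Y' j.
Proof.
move=> eqXY le_j; rewrite /Pform; congr (_ + _ - _); apply: eq_big_nat => i lt_i.
- by apply: (proj1 (eqXY _ _)); lia.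
- by apply: (proj2 (eqXY _ _)); lia.
Qed.

End PformAlgebra.

(* Cells of the (a,b)-standard diagram whose arms to the right of row r and
   below column i have lengths x r = c_r(X) and y i = c_i(Y). *)
Definition std_mem (a b : nat) (x y : nat -> nat) (p : nat * nat) : bool :=
  [&& 0 < p.1, 0 < p.2 &
      (p.1 <= a) && (p.2 <= b + x p.1) || (p.2 <= b) && (p.1 <= a + y p.2)].

Section StandardDiagram.
Variables (d a b : nat) (x y : nat -> nat) (D : diagram).
Hypotheses (d_ge2 : 2 <= d) (a_ge : d - 1 <= a) (b_ge : d - 1 <= b).
Hypotheses (x_vanish : forall r, d - 1 <= r -> x r = 0)
           (y_vanish : forall i, d - 1 <= i -> y i = 0).
Hypotheses (memD : forall p, (p \in D) = std_mem a b x y p) (ferD : is_ferrers D).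

Lemma std_row r : 0 < r <= a -> forall i, ((r, i) \in D) = (0 < i <= b + x r).
Proof. by move=> lt_r i; rewrite memD /std_mem /=; lia. Qed.

Lemma std_col i : 0 < i <= b -> forall r, ((r, i) \in D) = (0 < r <= a + y i).
Proof. by move=> lt_i r; rewrite memD /std_mem /=; lia. Qed.

Lemma std_corner r i : d - 1 <= r -> d - 1 <= i -> ((r, i) \in D) = (r <= a) && (i <= b).
Proof. by move=> le_r le_i; rewrite memD /std_mem /= x_vanish // y_vanish //; lia. Qed.

Lemma std_standard_form : standard_form D d a b.
Proof. exact/(standard_formP _ _ _ ferD)/std_corner. Qed.

Lemma cX_std r : 0 < r -> cX D b r = x r.
Proof.
move=> r_gt0; have [le_ra | lt_ar] := leqP r a.
  by rewrite /cX (card_row _ (std_row _)) ?count_gt_iota1 //; lia.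
rewrite x_vanish; last by lia.
rewrite /cX (_ : [fset _ in D | _] = fset0) ?cardfs0 //.
by apply/fsetP => -[r0 i0]; rewrite !inE memD /std_mem /=; lia.
Qed.

Lemma cY_std i : 0 < i -> cY D a i = y i.
Proof.
move=> i_gt0; have [le_ib | lt_bi] := leqP i b.
  by rewrite /cY (card_col _ (std_col _)) ?count_gt_iota1 //; lia.
rewrite y_vanish; last by lia.
rewrite /cY (_ : [fset _ in D | _] = fset0) ?cardfs0 //.
by apply/fsetP => -[r0 i0]; rewrite !inE memD /std_mem /=; lia.
Qed.

Lemma x_nonincr r : 0 < r < a -> x r.+1 <= x r.
Proof.
move=> lt_r; have : (r.+1, b + x r.+1) \in D by rewrite std_row //; lia.
move=> /ferD [_ _ /(_ r (b + x r.+1))]; rewrite std_row /=; lia.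
Qed.

Lemma y_nonincr i : 0 < i < b -> y i.+1 <= y i.
Proof.
move=> lt_i; have : (a + y i.+1, i.+1) \in D by rewrite std_col //; lia.
move=> /ferD [_ _ /(_ (a + y i.+1) i)]; rewrite std_col /=; lia.
Qed.

(* The quadrants of j and j+1 differ by part of row d-1-j and part of column j+1. *)
Lemma nu_succ j : j.+1 < d ->
  nu D d j.+1 + (a + y j.+1 - (d - j - 1)) = nu D d j + (b + x (d - j - 1) - j.+1).
Proof.
move=> lt_jd; rewrite !nuE //.
have -> : b + x (d - j - 1) - j.+1 = \sum_(p <- D) ((p.1 == d - j - 1) && (j.+1 < p.2)).
  by rewrite -card_fsep (card_row _ (std_row _)) ?count_gt_iota1 //; lia.
have -> : a + y j.+1 - (d - j - 1) = \sum_(p <- D) ((p.2 == j.+1) && (d - j - 1 < p.1)).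
  by rewrite -card_fsep (card_col _ (std_col _)) ?count_gt_iota1 //; lia.
by rewrite -!big_split; apply: eq_bigr => -[r i] _; rewrite /nu_quadrant /=; lia.
Qed.

Lemma nu_concave j : 0 < j -> j.+1 < d ->
  x (d - j - 1) <= x (d - j) -> y j <= y j.+1 ->
  nu D d j.-1 + nu D d j.+1 + 2 <= (nu D d j).*2.
Proof.
move=> j_gt0 lt_jd le_x le_y.
have := nu_succ lt_jd; have := @nu_succ j.-1; rewrite prednK // => /(_ (ltnW lt_jd)).
rewrite (_ : d - j.-1 - 1 = d - j); lia.
Qed.

Let d_gt0 : 0 < d := ltnW d_ge2.

Lemma irreducible_add_row_end m : irreducible D d -> 0 < m < d ->
  (m < d - 1 -> x (d - m) < x (d - m - 1)) -> exists2 j, j < m & nu D d j = nu_min D d.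
Proof.
move=> /(irreducibleP d_gt0 ferD) [_ addP] lt_m grow.
have PnD : (d - m, b + x (d - m) + 1) \notin D by rewrite std_row //; lia.
have ferPD : is_ferrers ((d - m, b + x (d - m) + 1) |` D).
  apply: ferrers_fset1U; rewrite // ?addn1 /=; try lia; last by right; rewrite std_row; lia.
  case: (ltnP m (d - 1)) => [lt_m1 | ge_m]; last by left; lia.
  by right; rewrite -subn1 std_row; have := grow lt_m1; lia.
have [j lt_jd [minj]] := addP _ PnD ferPD.
by rewrite /nu_quadrant /= => reg; exists j => //; lia.
Qed.

Lemma irreducible_del_col_end m : irreducible D d -> 0 < m < d - 1 -> y m.+1 < y m ->
  exists2 j, j < m & nu D d j = nu_min D d.
Proof.
move=> /(irreducibleP d_gt0 ferD) [remP _] lt_m shrink.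
have PD : (a + y m, m) \in D by rewrite std_col; lia.
have ferDP : is_ferrers (D `\ (a + y m, m)) by apply: ferrers_fsetD1 => //; rewrite std_col; lia.
have [j lt_jd [minj]] := remP _ PD ferDP.
by rewrite /nu_quadrant /= => reg; exists j => //; lia.
Qed.

Lemma irreducible_add_col_end m : irreducible D d -> m < d - 1 ->
  (0 < m -> y m.+1 < y m) -> exists2 j, m < j < d & nu D d j = nu_min D d.
Proof.
move=> /(irreducibleP d_gt0 ferD) [_ addP] lt_m grow.
have PnD : (a + y m.+1 + 1, m.+1) \notin D by rewrite std_col //; lia.
have ferPD : is_ferrers ((a + y m.+1 + 1, m.+1) |` D).
  apply: ferrers_fset1U; rewrite // ?addn1 /=; try lia; first by right; rewrite std_col; lia.
  case: (posnP m) => [-> | m_gt0]; first by left.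
  by right; rewrite std_col; have := grow m_gt0; lia.
have [j lt_jd [minj]] := addP _ PnD ferPD.
by rewrite /nu_quadrant /= => reg; exists j => //; lia.
Qed.

Lemma irreducible_del_row_end m : irreducible D d -> 0 < m < d - 1 ->
  x (d - m) < x (d - m - 1) -> exists2 j, m < j < d & nu D d j = nu_min D d.
Proof.
move=> /(irreducibleP d_gt0 ferD) [remP _] lt_m shrink.
have PD : (d - m - 1, b + x (d - m - 1)) \in D by rewrite std_row; lia.
have ferDP : is_ferrers (D `\ (d - m - 1, b + x (d - m - 1))).
  apply: ferrers_fsetD1 => //; last by rewrite std_row; lia.
  by rewrite (_ : (d - m - 1).+1 = d - m) ?std_row; lia.
have [j lt_jd [minj]] := remP _ PD ferDP.
by rewrite /nu_quadrant /= => reg; exists j => //; lia.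
Qed.

Lemma irreducible_nu0_min : irreducible D d -> nu D d 0 = nu_min D d.
Proof.
move=> irrD; apply/eqP; apply: contraT => ne_nu0.
have exP : exists j, (j < d) && (nu D d j == nu_min D d).
  by have [j lt_jd minj] := nu_min_attained D d_gt0; exists j; rewrite lt_jd minj eqxx.
have [m /andP [lt_md /eqP minm] least_m] := ex_minnP exP.
have below_m j : j < d -> nu D d j = nu_min D d -> m <= j.
  by move=> lt_jd minj; apply: least_m; rewrite lt_jd minj eqxx.
have m_gt0 : 0 < m by rewrite lt0n; apply: contra ne_nu0 => /eqP m0; rewrite -m0 minm.
have [lt_m1 le_x] : m < d - 1 /\ x (d - m - 1) <= x (d - m).
  apply/andP; apply: contraT => grow.
  have [j lt_jm /below_m] : exists2 j, j < m & nu D d j = nu_min D d.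
    by apply: irreducible_add_row_end => //; lia.
  by lia.
have le_y : y m <= y m.+1.
  rewrite leqNgt; apply/negP => shrink.
  have [j lt_jm /below_m] : exists2 j, j < m & nu D d j = nu_min D d.
    by apply: irreducible_del_col_end => //; lia.
  by lia.
have lt_m1d : m.+1 < d by lia.
have := nu_concave m_gt0 lt_m1d le_x le_y; have := nu_min_le D lt_m1d.
by have := below_m m.-1; have := nu_min_le D (leq_ltn_trans (leq_pred m) lt_md); lia.
Qed.

Lemma irreducible_nu_last_min : irreducible D d -> nu D d (d - 1) = nu_min D d.
Proof.
move=> irrD; apply/eqP; apply: contraT => ne_last.
have exP : exists j, (j < d) && (nu D d j == nu_min D d).
  by have [j lt_jd minj] := nu_min_attained D d_gt0; exists j; rewrite lt_jd minj eqxx.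
have ubP j : (j < d) && (nu D d j == nu_min D d) -> j <= d by case/andP => /ltnW.
have [M /andP [lt_Md /eqP minM] greatest_M] := ex_maxnP exP ubP.
have above_M j : j < d -> nu D d j = nu_min D d -> j <= M.
  by move=> lt_jd minj; apply: greatest_M; rewrite lt_jd minj eqxx.
have lt_M1 : M < d - 1.
  have ne_M : M != d - 1 by apply: contra ne_last => /eqP <-; rewrite minM.
  lia.
have [M_gt0 le_y] : 0 < M /\ y M <= y M.+1.
  apply/andP; apply: contraT => grow.
  have [j /andP [lt_Mj lt_jd] /(above_M _ lt_jd)] : exists2 j, M < j < d & nu D d j = nu_min D d.
    by apply: irreducible_add_col_end => //; lia.
  by lia.
have le_x : x (d - M - 1) <= x (d - M).
  rewrite leqNgt; apply/negP => shrink.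
  have [j /andP [lt_Mj lt_jd] /(above_M _ lt_jd)] : exists2 j, M < j < d & nu D d j = nu_min D d.
    by apply: irreducible_del_row_end => //; lia.
  by lia.
have lt_M1d : M.+1 < d by lia.
have := nu_concave M_gt0 lt_M1d le_x le_y; have := nu_min_le D (leq_ltn_trans (leq_pred M) lt_Md).
by have := above_M M.+1 lt_M1d; have := nu_min_le D lt_M1d; lia.
Qed.

Lemma irreducible_square : irreducible D d -> a = d - 1 -> b = d - 1 ->
  exists j, 0 < j < d - 1 /\ nu D d j = nu D d 0.
Proof.
move=> irrD ea eb; have [remP _] := (irreducibleP d_gt0 ferD).1 irrD.
have PD : (a, b) \in D by rewrite std_corner ?leqnn.
have ferDP : is_ferrers (D `\ (a, b)) by apply: ferrers_fsetD1; rewrite // std_corner; lia.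
have [j lt_jd [minj]] := remP _ PD ferDP.
by rewrite /nu_quadrant /= => reg; exists j; rewrite minj irreducible_nu0_min //; split => //; lia.
Qed.

Lemma std_irreducible :
  (forall j, j < d -> nu D d 0 <= nu D d j) -> nu D d (d - 1) = nu D d 0 ->
  (a = d - 1 -> b = d - 1 -> exists j, 0 < j < d - 1 /\ nu D d j = nu D d 0) ->
  irreducible D d.
Proof.
move=> nu0_le nu_last square.
have min0 : nu_min D d = nu D d 0.
  have [k lt_kd mink] := nu_min_attained D d_gt0.
  by have := nu_min_le D d_gt0; have := nu0_le k lt_kd; lia.
apply/(irreducibleP d_gt0 ferD); rewrite min0; split => [[r i] PD ferDP | [r i] PnD ferPD].
- have [/= r_gt0 i_gt0 _] := ferD PD.
  have [le_di | lt_id] := leqP d i.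
    by exists (d - 1); [lia | rewrite nu_last /nu_quadrant /=; split; lia].
  have [le_dr | lt_rd] := leqP d r.
    by exists 0; [lia | rewrite /nu_quadrant /=; split; lia].
  have /andP [/eqP er /eqP ei] : (r == a) && (i == b).
    apply: contraT => neP.
    have abDP : (a, b) \in D `\ (r, i) by rewrite in_fsetD1 xpair_eqE std_corner //; lia.
    have [_ _ /(_ r i)] := ferDP _ abDP; rewrite fsetD11 /=; apply; lia.
  have [j [lt_j nuj]] : exists j, 0 < j < d - 1 /\ nu D d j = nu D d 0 by apply: square; lia.
  by exists j; [lia | rewrite nuj /nu_quadrant /=; split; lia].
- have [le_id | lt_di] := leqP i (d - 1).
    by exists (d - 1); [lia | rewrite nu_last /nu_quadrant /=; split; lia].
  have [le_rd | lt_dr] := leqP r (d - 1).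
    by exists 0; [lia | rewrite /nu_quadrant /=; split; lia].
  have [_ _ downPD] := ferPD _ (fset1U1 _ _).
  have below q : q != (r, i) -> 0 < q.1 <= r -> 0 < q.2 <= i -> q \in D.
    move=> ne_q le1 le2; have := downPD _ _ le1 le2.
    by rewrite -surjective_pairing in_fset1U (negbTE ne_q).
  have := below (r.-1, i); have := below (r, i.-1); rewrite !xpair_eqE /= !std_corner; try lia.
  by move: PnD; rewrite std_corner; lia.
Qed.

Local Open Scope ring_scope.

Lemma nu_sub_nu0 j : (j < d)%N ->
  (nu D d j)%:Z - (nu D d 0)%:Z = Pform d a b (fun i => (x i)%:Z) (fun i => (y i)%:Z) j.
Proof.
elim: j => [|j IH] lt_jd; first by rewrite subrr Pform0.
have := nu_succ lt_jd; rewrite PformS -IH; last by lia.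
have -> : (if j is 0 then 0 else (x (d - 1 - j)%N)%:Z) = (x (d - j - 1))%:Z.
  by case: j {IH lt_jd} => [|j] /=; [rewrite subn0 x_vanish | rewrite subnAC].
lia.
Qed.

Lemma irreducible_stdE :
  irreducible D d <-> inP d a b (fun i => (x i)%:Z) (fun i => (y i)%:Z).
Proof.
have Plast := Pform_last a b (fun i => (x i)%:Z) (fun i => (y i)%:Z) d_ge2.
rewrite /= y_vanish // in Plast.
split => [irrD | [_ _ Pge0 Psum Psquare]].
- have nu0 := irreducible_nu0_min irrD; have nu_last := irreducible_nu_last_min irrD.
  split => [j lt_j | // | j lt_j | | [ab bd]].
  + by rewrite !lez_nat x_nonincr ?y_nonincr //; lia.
  + by rewrite -nu_sub_nu0 ?subr_ge0 ?lez_nat ?nu0 ?nu_min_le //; lia.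
  + move: Plast; rewrite -nu_sub_nu0 ?nu_last ?nu0 ?subrr; last by lia.
    by move=> /esym/eqP; rewrite subr0 subr_eq0 => /eqP <-; rewrite addrK.
  + have [j [lt_j nuj]] : exists j, (0 < j < d - 1)%N /\ nu D d j = nu D d 0.
      by apply: irreducible_square => //; lia.
    by exists j; split; [lia | rewrite -nu_sub_nu0 ?nuj ?subrr //; lia].
- have nu_last : nu D d (d - 1) = nu D d 0.
    apply/eqP; rewrite -eqz_nat -subr_eq0 nu_sub_nu0 ?Plast -?Psum; last by lia.
    by apply/eqP; ring.
  apply: std_irreducible => // [j lt_jd | ea eb].
  + have [-> // | j_gt0] := posnP j; have [le_j | lt_j] := leqP j (d - 2).
      by rewrite -lez_nat -subr_ge0 nu_sub_nu0 // Pge0 //; lia.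
    by rewrite (_ : j = d - 1)%N ?nu_last //; lia.
  + have [|j [lt_j Pj]] := Psquare; first by split; lia.
    exists j; split; first lia.
    by apply/eqP; rewrite -eqz_nat -subr_eq0 nu_sub_nu0 ?Pj //; lia.
Qed.

End StandardDiagram.

Lemma ferrers_standard_std (D : diagram) d a b : d - 1 <= a -> d - 1 <= b ->
  is_ferrers D -> standard_form D d a b ->
  [/\ forall r, d - 1 <= r -> cX D b r = 0, forall i, d - 1 <= i -> cY D a i = 0
    & forall p, (p \in D) = std_mem a b (cX D b) (cY D a) p].
Proof.
move=> a_ge b_ge ferD /(standard_formP _ _ _ ferD) cornerD.
have abD : (a, b) \in D by rewrite cornerD ?leqnn.
have /= [a_gt0 b_gt0 downab] := ferD _ abD.
have rowX r : exists2 L, cX D b r = L - b & forall i, ((r, i) \in D) = (0 < i <= L).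
  by have [L rowD] := ferrers_row r ferD; exists L; rewrite // /cX (card_row _ rowD) count_gt_iota1.
have colY i : exists2 L, cY D a i = L - a & forall r, ((r, i) \in D) = (0 < r <= L).
  by have [L colD] := ferrers_col i ferD; exists L; rewrite // /cY (card_col _ colD) count_gt_iota1.
split => [r le_r | i le_i | [r i]].
- by have [L -> rowD] := rowX r; have := cornerD r L le_r; rewrite rowD; lia.
- by have [L -> colD] := colY i; have := cornerD L i; rewrite colD; lia.
rewrite /std_mem /=; have [L -> rowD] := rowX r; have [L' -> colD] := colY i.
have [-> | r_gt0] := posnP r; first by rewrite colD.
have [-> | i_gt0] := posnP i; first by rewrite rowD andbF.
have [le_ra | lt_ar] := leqP r a.
  by have := downab r b; rewrite rowD rowD; lia.
have [le_ib | lt_bi] := leqP i b.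
  by have := downab a i; rewrite colD colD; lia.
by have := cornerD r i; rewrite rowD; lia.
Qed.

Lemma std_mem_congr a b (x y x' y' : nat -> nat) :
  (forall r, 0 < r -> x r = x' r) -> (forall i, 0 < i -> y i = y' i) ->
  std_mem a b x y =1 std_mem a b x' y'.
Proof.
move=> eq_x eq_y [r i]; rewrite /std_mem /=.
by have [-> // | /eq_x ->] := posnP r; have [-> | /eq_y ->] := posnP i; rewrite ?andbF.
Qed.

Lemma leq_nonincr (f : nat -> nat) m : (forall k, m <= k -> f k.+1 <= f k) ->
  forall k k', m <= k <= k' -> f k' <= f k.
Proof.
move=> f_step k k' /andP [le_mk]; elim: k' => [|k' IH]; first by rewrite leqn0 => /eqP ->.
rewrite leq_eqVlt ltnS => /predU1P [<- // | le_kk'].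
exact: leq_trans (f_step _ (leq_trans le_mk le_kk')) (IH le_kk').
Qed.

Lemma std_diagram_exists a b (x y : nat -> nat) :
  (forall r, 0 < r -> x r.+1 <= x r) -> (forall i, 0 < i -> y i.+1 <= y i) ->
  exists2 D : diagram, is_ferrers D & forall p, (p \in D) = std_mem a b x y p.
Proof.
move=> /leq_nonincr x_le /leq_nonincr y_le.
pose box := [fset r in iota 0 (a + y 1).+1] `*` [fset i in iota 0 (b + x 1).+1].
have memD p : (p \in [fset q in box | std_mem a b x y q]) = std_mem a b x y p.
  case: p => r i; rewrite !inE /= !mem_iota /std_mem /=.
  by have := x_le 1 r; have := y_le 1 i; lia.
exists [fset q in box | std_mem a b x y q] => // -[r i]; rewrite memD /std_mem /=.
move=> std_ri; split; [lia | lia | move=> r' i' le_r' le_i'].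
by rewrite memD /std_mem /=; have := x_le r' r; have := y_le i' i; lia.
Qed.

Local Open Scope ring_scope.

Lemma inP_congr d a b (X Y X' Y' : nat -> int) :
  (forall i, (0 < i <= d - 2)%N -> X i = X' i /\ Y i = Y' i) ->
  inP d a b X Y -> inP d a b X' Y'.
Proof.
move=> eqXY [monoXY nnegXY Pge0 sumXY squareXY].
have eqPform j : (j <= d - 2)%N -> Pform d a b X' Y' j = Pform d a b X Y j.
  by move=> le_j; rewrite (Pform_congr a b eqXY le_j).
have eq_sum (F F' : nat -> int) : (forall i, (0 < i <= d - 2)%N -> F i = F' i) ->
    \sum_(1 <= i < d - 1) F' i = \sum_(1 <= i < d - 1) F i.
  by move=> eqF; apply: eq_big_nat => i lt_i; rewrite eqF //; lia.
split => [j lt_j | j lt_j | j lt_j | | square].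
- have [<- <-] : X j = X' j /\ Y j = Y' j by apply: eqXY; lia.
  have [<- <-] : X j.+1 = X' j.+1 /\ Y j.+1 = Y' j.+1 by apply: eqXY; lia.
  exact: monoXY.
- by have [<- <-] := eqXY j lt_j; exact: nnegXY.
- by rewrite eqPform; [exact: Pge0 | lia].
- have eqX i : (0 < i <= d - 2)%N -> X i = X' i by case/eqXY.
  have eqY i : (0 < i <= d - 2)%N -> Y i = Y' i by case/eqXY.
  by rewrite (eq_sum _ _ eqX) (eq_sum _ _ eqY).
- by have [j [lt_j Pj]] := squareXY square; exists j; rewrite eqPform; last lia.
Qed.

Lemma exists_Irr_of_inP d a b (x y : nat -> int) :
  (2 <= d)%N -> (d - 1 <= a)%N -> (d - 1 <= b)%N -> inP d a b x y ->
  exists D : diagram, Irr d a b D /\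
    (forall i, (1 <= i <= d - 2)%N -> (cX D b i)%:Z = x i /\ (cY D a i)%:Z = y i).
Proof.
move=> d_ge2 a_ge b_ge inPxy; have [monoxy nnegxy _ _ _] := inPxy.
pose xn r := if (0 < r <= d - 2)%N then `|x r|%N else 0%N.
pose yn i := if (0 < i <= d - 2)%N then `|y i|%N else 0%N.
have xyn i : (0 < i <= d - 2)%N -> (xn i)%:Z = x i /\ (yn i)%:Z = y i.
  by move=> lt_i; rewrite /xn /yn lt_i; have := nnegxy i lt_i; lia.
have xn_vanish r : (d - 1 <= r)%N -> xn r = 0%N by move=> le_r; rewrite /xn ifF //; lia.
have yn_vanish i : (d - 1 <= i)%N -> yn i = 0%N by move=> le_i; rewrite /yn ifF //; lia.
have xn_mono r : (0 < r)%N -> (xn r.+1 <= xn r)%N.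
  move=> r_gt0; rewrite /xn; case: ifP => // lt_r; rewrite ifT; last by lia.
  by have := monoxy r; have := nnegxy r; have := nnegxy r.+1; lia.
have yn_mono i : (0 < i)%N -> (yn i.+1 <= yn i)%N.
  move=> i_gt0; rewrite /yn; case: ifP => // lt_i; rewrite ifT; last by lia.
  by have := monoxy i; have := nnegxy i; have := nnegxy i.+1; lia.
have [D ferD memD] := std_diagram_exists a b xn_mono yn_mono.
have stdE := irreducible_stdE d_ge2 a_ge b_ge xn_vanish yn_vanish memD ferD.
exists D; split.
- split => //; first exact: std_standard_form d_ge2 a_ge b_ge xn_vanish yn_vanish memD ferD.
  by apply/stdE; apply: inP_congr inPxy => i /xyn [-> ->].
- move=> i lt_i; rewrite (cX_std d_ge2 a_ge b_ge xn_vanish memD); last by lia.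
  by rewrite (cY_std d_ge2 a_ge b_ge yn_vanish memD); [exact: xyn | lia].
Qed.

Theorem theorem5p3 (d a b : nat) :
  (2 <= d)%N -> (0 < a)%N -> (0 < b)%N -> (d - 1 <= minn a b)%N ->
  [/\ (* well defined: Psi maps Irr into P ∩ Z^(2d-4) *)
      (forall D : diagram, Irr d a b D ->
         inP d a b (fun i => (cX D b i)%:Z) (fun i => (cY D a i)%:Z)),
      (* injective *)
      (forall D1 D2 : diagram, Irr d a b D1 -> Irr d a b D2 ->
         (forall i, (1 <= i <= d - 2)%N ->
            cX D1 b i = cX D2 b i /\ cY D1 a i = cY D2 a i) ->
         D1 = D2)
    & (* surjective *)
      (forall x y : nat -> int, inP d a b x y ->
         exists D : diagram, Irr d a b D /\
           (forall i, (1 <= i <= d - 2)%N ->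
              (cX D b i)%:Z = x i /\ (cY D a i)%:Z = y i))].
Proof.
move=> d_ge2 _ _; rewrite leq_min => /andP [a_ge b_ge]; split.
- move=> D [ferD stdD irrD].
  have [x_vanish y_vanish memD] := ferrers_standard_std a_ge b_ge ferD stdD.
  exact/(irreducible_stdE d_ge2 a_ge b_ge x_vanish y_vanish memD ferD).
- move=> D1 D2 [ferD1 stdD1 _] [ferD2 stdD2 _] eqXY.
  have [x1_vanish y1_vanish memD1] := ferrers_standard_std a_ge b_ge ferD1 stdD1.
  have [x2_vanish y2_vanish memD2] := ferrers_standard_std a_ge b_ge ferD2 stdD2.
  apply/fsetP => p; rewrite memD1 memD2; apply: std_mem_congr => [r | i] pos.
  + have [le_r | lt_r] := leqP (d - 1) r; first by rewrite x1_vanish ?x2_vanish.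
    by apply: (proj1 (eqXY r _)); lia.
  + have [le_i | lt_i] := leqP (d - 1) i; first by rewrite y1_vanish ?y2_vanish.
    by apply: (proj2 (eqXY i _)); lia.
- move=> x y; exact: exists_Irr_of_inP.
Qed.
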